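(* Let $q^*$ be the unique positive solution of the equation $q\log 2=2^{q-1}-1$, and let $0<q<q^*$. For $p>q$ let $V(x)=\frac{|x|^p}{p}-\frac{|x|^q}{q}$ on ${\mathbb R}$ and $E(\rho)=\frac12\iint V(x-y)\,d\rho(x)\,d\rho(y)$ for $\rho\in\mathcal P({\mathbb R})$. Then there exists $p_*=p_*(q)>q$ such that for all $p\in(q,p_* )$ and all $1\le\lambda<\infty$, the measure $\rho^*=\frac12\delta_0+\frac12\delta_1$ is not a $d_\lambda$-local minimizer of $E$.
   Context: $\mathcal P_\lambda({\mathbb R})$ is the set of Borel probability measures on ${\mathbb R}$ with finite moment of order $\lambda$, and $d_\lambda(\mu,\nu)=\big[\inf_{\pi\in\Pi(\mu,\nu)}\iint|x-y|^\lambda d\pi(x,y)\big]^{1/\lambda}$ is the $\lambda$-Wasserstein distance, $\Pi(\mu,\nu)$ being the set of couplings. A measure $\rho\in\mathcal P_\lambda({\mathbb R})$ is a $d_\lambda$-local minimizer of $E$ if there is $\eta>0$ such that $E(\rho)\le E(\rho')$ for all $\rho'\in\mathcal P_\lambda({\mathbb R})$ with $d_\lambda(\rho,\rho')\le\eta$. *)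

From HB Require Import structures.
From mathcomp Require Import all_boot all_order all_algebra.
From mathcomp Require Import all_classical all_reals all_analysis.
Set Implicit Arguments. Unset Strict Implicit. Unset Printing Implicit Defensive.
Import Order.TTheory GRing.Theory Num.Theory.
Import numFieldNormedType.Exports.
Local Open Scope classical_set_scope.
Local Open Scope ring_scope.

Section defs.
Context (R : realType).
Definition half_dirac (a : R) : {measure set R -> \bar R} :=
  mscale (2^-1)%:nng (@dirac _ R a R).

Local Open Scope ereal_scope.

Definition rho_star_fun : set R -> \bar R :=
  measure_add (half_dirac 0) (half_dirac 1).

HB.instance Definition _ := Measure.on rho_star_fun.

Lemma rho_star_setT : rho_star_fun setT = 1.
Proof.
rewrite /rho_star_fun measure_addE /half_dirac.
change ((2^-1)%:E * (@dirac _ R 0%R R) setT + (2^-1)%:E * (@dirac _ R 1%R R) setT = 1).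
rewrite !diracT !mule1 -EFinD.
by congr EFin; rewrite [in RHS](splitr 1) mul1r.
Qed.
HB.instance Definition _ := Measure_isProbability.Build _ _ _ rho_star_fun rho_star_setT.

Definition rho_star : probability R R := rho_star_fun.

Definition moment (lam : R) (mu : probability R R) : \bar R :=
  \int[mu]_x (`|x| `^ lam)%:E.

Definition finite_moment (lam : R) (mu : probability R R) : Prop :=
  moment lam mu < +oo.

Definition coupling (mu nu : probability R R) (pi : probability (R * R)%type R) : Prop :=
  (forall A : set R, measurable A -> pi (A `*` setT) = mu A) /\
  (forall B : set R, measurable B -> pi (setT `*` B) = nu B).

Definition wass_cost (lam : R) (mu nu : probability R R) : \bar R :=
  ereal_inf [set \int[pi]_z (`|z.1 - z.2| `^ lam)%:E | pi in coupling mu nu].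

Definition wass_dist (lam : R) (mu nu : probability R R) : R :=
  fine (wass_cost lam mu nu) `^ lam^-1.

Definition Vpot (p q : R) (x : R) : R := `|x| `^ p / p - `|x| `^ q / q.

Definition energy (p q : R) (rho : probability R R) : \bar R :=
  (2^-1)%:E * \int[rho]_x \int[rho]_y (Vpot p q (x - y))%:E.

Definition local_minimizer (lam : R) (E : probability R R -> \bar R)
  (rho : probability R R) : Prop :=
  finite_moment lam rho /\
  exists eta : R, (0 < eta)%R /\
    forall rho' : probability R R, finite_moment lam rho' ->
      (wass_dist lam rho rho' <= eta)%R -> E rho <= E rho'.
End defs.
Arguments rho_star {R}.

(* Moving a mass b from the two atoms of rho* to their midpoint 1/2 has transport
   cost b 2^-lam, and changes the energy by -b (V(1)/2 - V(1/2)) + O(b^2); so rho*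
   is not a local minimizer as soon as V(1/2) < V(1)/2.  This inequality reads
   g(p) < g(q) for g(s) = (2^-s - 1/2)/s, hence holds for p slightly above q
   when g'(q) < 0, i.e. when 2^(q-1) - 1 < q ln 2.  The latter holds for
   0 < q < q* because t |-> 2^(t-1) - 1 - t ln 2 is convex, equals -1/2 at 0 and
   vanishes at q*. *)

From HB Require Import structures.
From mathcomp Require Import all_boot all_order all_algebra.
From mathcomp Require Import all_classical all_reals all_analysis measurable_realfun.
From mathcomp Require Import lra ring.
Set Implicit Arguments. Unset Strict Implicit. Unset Printing Implicit Defensive.
Import Order.TTheory GRing.Theory Num.Theory.
Import numFieldNormedType.Exports.
Local Open Scope classical_set_scope.
Local Open Scope ring_scope.

Section discrete_measure.
Context d (T : measurableType d) (R : realType).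
Implicit Types (s : seq ({nonneg R} * T)) (f : T -> R).
Local Open Scope ereal_scope.

Definition wdirac (w : {nonneg R}) (x : T) : {measure set T -> \bar R} :=
  mscale w \d_x.

Lemma integral_wdirac w x f : measurable_fun setT f ->
  \int[wdirac w x]_z (f z)%:E = (w%:num * f x)%:E.
Proof.
move=> mf; have mfE : measurable_fun setT (fun z => (f z)%:E) by exact/measurable_EFinP.
rewrite integralE /wdirac !ge0_integral_mscale //; last 2 first.
- exact: measurable_funeneg.
- exact: measurable_funepos.
rewrite !integral_dirac //; last 2 first.
- exact: measurable_funeneg.
- exact: measurable_funepos.
rewrite diracT !mul1e funeposE funenegE /= -!EFin_max -!EFinM -EFinB.
congr EFin; rewrite -mulrBr; congr (_ * _)%R.
by rewrite /Num.max; case: ifPn; case: ifPn; lra.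
Qed.

Lemma integrable_wdirac w x f : measurable_fun setT f ->
  (wdirac w x).-integrable setT (EFin \o f).
Proof.
move=> mf; apply/integrableP; split; first exact/measurable_EFinP.
rewrite /wdirac ge0_integral_mscale //; last exact/measurableT_comp/measurable_EFinP.
by rewrite integral_dirac ?diracT ?mul1e -?EFinM ?ltry //;
  exact/measurableT_comp/measurable_EFinP.
Qed.

Definition discrete_measure s : {measure set T -> \bar R} :=
  foldr (fun wx m => measure_add (wdirac wx.1 wx.2) m) mzero s.

Lemma discrete_measure_cons w x s :
  discrete_measure ((w, x) :: s) = measure_add (wdirac w x) (discrete_measure s)
  :> (set T -> \bar R).
Proof. by []. Qed.

Lemma discrete_measureE s A :
  discrete_measure s A = (\sum_(wx <- s) wx.1%:num * \1_A wx.2)%:E.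
Proof.
elim: s => [|[w x] s IHs]; first by rewrite big_nil.
by rewrite discrete_measure_cons measure_addE IHs big_cons EFinD EFinM.
Qed.

Lemma integrable_discrete_measure s f : measurable_fun setT f ->
  (discrete_measure s).-integrable setT (EFin \o f).
Proof.
move=> mf; have mfE : measurable_fun setT (fun z => (f z)%:E) by exact/measurable_EFinP.
elim: s => [|[w x] s IHs]; apply/integrableP; split => //.
  by rewrite integral_measure_zero.
rewrite discrete_measure_cons ge0_integral_measure_add //; last exact: measurableT_comp.
apply: lte_add_pinfty.
- by case/integrableP: (integrable_wdirac w x mf).
- by case/integrableP: IHs.
Qed.

Lemma integral_discrete_measure s f : measurable_fun setT f ->
  \int[discrete_measure s]_z (f z)%:E = (\sum_(wx <- s) wx.1%:num * f wx.2)%:E.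
Proof.
move=> mf; elim: s => [|[w x] s IHs]; first by rewrite integral_measure_zero big_nil.
rewrite discrete_measure_cons integral_measure_add //.
- by rewrite integral_wdirac // IHs big_cons EFinD.
- exact: integrable_wdirac.
- exact: integrable_discrete_measure.
Qed.

Lemma mnormalize_id (mu : {measure set T -> \bar R}) (P : probability T R) :
  mu setT = 1 -> mnormalize mu P = mu.
Proof.
by move=> mu1; apply/funext => A; rewrite /mnormalize mu1 onee_eq0 /= invr1 mule1.
Qed.

(* [x0] is only the fallback of [mnormalize] when the weights do not sum to 1. *)
Definition discrete_probability (x0 : T) s : probability T R :=
  mnormalize (discrete_measure s) \d_x0.

Lemma discrete_probabilityE x0 s : (\sum_(wx <- s) wx.1%:num = 1)%R ->
  discrete_probability x0 s = discrete_measure s :> (set T -> \bar R).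
Proof.
move=> s1; apply: mnormalize_id; rewrite discrete_measureE -s1.
by congr EFin; apply: eq_bigr => wx _; rewrite indicT mulr1.
Qed.

End discrete_measure.

Section potential.
Context (R : realType).
Implicit Types (p q lam : R) (s : seq ({nonneg R} * R)).

Lemma measurable_normr_powR lam : measurable_fun setT (fun x : R => `|x| `^ lam).
Proof.
apply: (@measurableT_comp _ _ _ _ _ _ (@powR R ^~ lam)); first exact: measurable_powR.
exact: normr_measurable.
Qed.

Lemma measurable_Vpot p q : measurable_fun setT (Vpot p q).
Proof.
by apply: measurable_funB; apply: measurable_funM => //; exact: measurable_normr_powR.
Qed.

Lemma Vpot0 p q : p != 0 -> q != 0 -> Vpot p q 0 = 0.
Proof. by move=> p0 q0; rewrite /Vpot normr0 !powR0 // !mul0r subrr. Qed.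

Lemma VpotN p q x : Vpot p q (- x) = Vpot p q x.
Proof. by rewrite /Vpot normrN. Qed.

Lemma energy_discrete p q (rho : probability R R) s :
  rho = discrete_measure s :> (set R -> \bar R) ->
  energy p q rho =
  (2^-1 * \sum_(a <- s) \sum_(b <- s) a.1%:num * b.1%:num * Vpot p q (a.2 - b.2))%:E.
Proof.
move=> rhoE; rewrite /energy rhoE.
have mVx (x : R) : measurable_fun setT (fun y : R => Vpot p q (x - y)).
  apply: (measurableT_comp (f := Vpot p q)); first exact: measurable_Vpot.
  exact: measurable_funB.
have mVy (y : R) : measurable_fun setT (fun x : R => Vpot p q (x - y)).
  apply: (measurableT_comp (f := Vpot p q)); first exact: measurable_Vpot.
  exact: measurable_funB.
under eq_integral => x _ do rewrite integral_discrete_measure //.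
rewrite integral_discrete_measure -?EFinM; last first.
  by apply: measurable_sum => b; apply: measurable_funM.
congr (EFin (_ * _)); apply: eq_bigr => a _; rewrite big_distrr.
by apply: eq_bigr => b _; rewrite /= mulrA.
Qed.

Lemma finite_moment_discrete lam (rho : probability R R) s :
  rho = discrete_measure s :> (set R -> \bar R) -> finite_moment lam rho.
Proof.
move=> rhoE; rewrite /finite_moment /moment rhoE integral_discrete_measure ?ltry //.
exact: measurable_normr_powR.
Qed.

End potential.

Lemma wass_dist_le_coupling (R : realType) (lam eta : R) (mu nu : probability R R)
    (pi : probability (R * R)%type R) :
  0 < lam -> 0 <= eta -> coupling mu nu pi ->
  (\int[pi]_z (`|z.1 - z.2| `^ lam)%:E <= (eta `^ lam)%:E)%E ->
  wass_dist lam mu nu <= eta.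
Proof.
move=> lam0 eta0 pi_mu_nu pi_cost.
have cost_le : (wass_cost lam mu nu <= (eta `^ lam)%:E)%E.
  by apply: le_trans pi_cost; apply: ereal_inf_lbound; exists pi.
have cost_ge0 : (0 <= wass_cost lam mu nu)%E.
  apply: le_ereal_inf_tmp => _ [pi' _ <-]; apply: integral_ge0 => z _.
  by rewrite lee_fin powR_ge0.
have fine_le : fine (wass_cost lam mu nu) <= eta `^ lam.
  by move: cost_le cost_ge0; case: (wass_cost lam mu nu) => //= r; rewrite lee_fin.
rewrite /wass_dist -[leRHS]powRr1 // -(mulfV (lt0r_neq0 lam0)) powRrM.
apply: ge0_ler_powR => //.
- by rewrite invr_ge0 ltW.
- by rewrite nnegrE fine_ge0.
- by rewrite nnegrE powR_ge0.
Qed.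

Section two_powers.
Context (R : realType).
Implicit Types (p q x : R).

Lemma two_powRE x : 2 `^ x = expR (x * ln 2) :> R.
Proof. by rewrite /powR gt_eqF. Qed.

Lemma half_powRE x : (2^-1) `^ x = expR (- (x * ln 2)) :> R.
Proof. by rewrite /powR gt_eqF ?invr_gt0 // lnV ?posrE // mulrN. Qed.

Lemma two_powR_sub1_lt (qs q : R) : qs * ln 2 = 2 `^ (qs - 1) - 1 -> 0 < q < qs ->
  2 `^ (q - 1) - 1 < q * ln 2.
Proof.
move=> hqs /andP[q0 qqs]; have qs0 : 0 < qs := lt_trans q0 qqs.
set t := q / qs.
have t_ge0 : 0 <= t by rewrite divr_ge0 // ltW.
have t_lt1 : t < 1 by rewrite ltr_pdivrMr // mul1r.
have tqs : t * qs = q by rewrite divfK // gt_eqF.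
have : expR (t * ((qs - 1) * ln 2) + (1 - t) * - ln 2)
    <= t * expR ((qs - 1) * ln 2) + (1 - t) * expR (- ln 2).
  exact: (convex_expR (Itv01 t_ge0 (ltW t_lt1)) ((qs - 1) * ln 2) (- ln 2)).
have -> : t * ((qs - 1) * ln 2) + (1 - t) * - ln 2 = (q - 1) * ln 2 by rewrite -tqs; ring.
rewrite expRN lnK ?posrE // -!two_powRE (_ : 2 `^ (qs - 1) = qs * ln 2 + 1); last lra.
rewrite mulrDr mulrA tqs; lra.
Qed.

Lemma Vpot_half_lt p q : 0 < q < p ->
  (p - q) * ((`|2 `^ (q - 1) - 1| + 1) * ln 2) < q * ln 2 - (2 `^ (q - 1) - 1) ->
  Vpot p q (2^-1) < Vpot p q 1 / 2.
Proof.
(* With h = p - q: V(1/2) - V(1)/2 = (q (2^-h - 1) + h c) / (p q 2^q), and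
   2^-h (1 + h ln 2) <= 1. *)
move=> /andP[q0 qp]; set L := ln 2; set c := 2 `^ (q - 1) - 1; set h := p - q.
move=> p_near_q.
have L0 : 0 < L by rewrite ln_gt0 //; lra.
have h0 : 0 < h by rewrite subr_gt0.
have p0 : 0 < p := lt_trans q0 qp.
have hL0 : 0 < h * L by exact: mulr_gt0.
set E := expR (q * L); set w := expR (- (h * L)).
have E0 : 0 < E by exact: expR_gt0.
have cE : c = E / 2 - 1.
  by rewrite /c two_powRE mulrBl mul1r expRD expRN lnK ?posrE.
have w_decay : w * (1 + h * L) <= 1.
  by rewrite /w expRN ler_pdivrMl ?expR_gt0 // mulr1 expR_ge1Dx.
have chL : c * (h * L) < q * L - c.
  apply: le_lt_trans p_near_q.
  have -> : h * ((`|c| + 1) * L) = (`|c| + 1) * (h * L) by ring.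
  by rewrite ler_pM2r ?mulr_gt0 //; have := ler_norm c; lra.
have key : q * (w - 1) + h * c < 0.
  have : (1 + h * L) * (q * (w - 1) + h * c) < 0 by nra.
  by rewrite pmulr_rlt0 //; lra.
have -> : Vpot p q (2^-1) = w / E / p - 1 / E / q.
  rewrite /Vpot ger0_norm ?invr_ge0 // !half_powRE /w /E div1r -expRN -expRD.
  by congr (expR _ / _ - _); rewrite /h /L; ring.
rewrite /Vpot normr1 !powR1 -subr_gt0.
have -> : (1 / p - 1 / q) / 2 - (w / E / p - 1 / E / q) =
  - (q * (w - 1) + h * c) / (p * q * E) by rewrite cE /h; field; lra.
by rewrite divr_gt0 ?oppr_gt0 // !mulr_gt0.
Qed.

End two_powers.

Lemma rho_starE (R : realType) : rho_star =
  discrete_measure [:: ((2^-1)%:nng, 0 : R); ((2^-1)%:nng, 1)] :> (set R -> \bar R).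
Proof.
apply/funext => A; rewrite discrete_measureE !big_cons big_nil addr0 EFinD.
by rewrite [LHS]measure_addE /half_dirac /= !EFinM.
Qed.

Lemma energy_rho_star (R : realType) (p q : R) : p != 0 -> q != 0 ->
  energy p q rho_star = (Vpot p q 1 / 4)%:E.
Proof.
move=> p0 q0; rewrite (energy_discrete p q (rho_starE R)) !big_cons !big_nil /=.
rewrite !subrr subr0 sub0r VpotN Vpot0 //; congr EFin; lra.
Qed.

Section midpoint_perturbation.
Context (R : realType) (b : R).
Hypotheses (b_ge0 : 0 <= b) (b_le1 : b <= 1).

Let out_ge0 : 0 <= (1 - b) / 2. Proof. by rewrite divr_ge0 // subr_ge0. Qed.
Let half_ge0 : 0 <= b / 2. Proof. by rewrite divr_ge0. Qed.

Let mid_atoms : seq ({nonneg R} * R) :=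
  [:: (NngNum out_ge0, 0); (NngNum out_ge0, 1); (NngNum b_ge0, 2^-1)].

Let plan_atoms : seq ({nonneg R} * (R * R)) :=
  [:: (NngNum out_ge0, (0, 0)); (NngNum out_ge0, (1, 1));
      (NngNum half_ge0, (0, 2^-1)); (NngNum half_ge0, (1, 2^-1))].

Definition rho_mid : probability R R := discrete_probability (0 : R) mid_atoms.

Definition pi_mid : probability (R * R)%type R :=
  discrete_probability ((0, 0) : R * R) plan_atoms.

Let rho_midE : rho_mid = discrete_measure mid_atoms :> (set R -> \bar R).
Proof. by apply: discrete_probabilityE; rewrite !big_cons big_nil /=; lra. Qed.

Let pi_midE : pi_mid = discrete_measure plan_atoms :> (set (R * R) -> \bar R).
Proof. by apply: discrete_probabilityE; rewrite !big_cons big_nil /=; lra. Qed.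

Lemma finite_moment_rho_mid lam : finite_moment lam rho_mid.
Proof. exact: finite_moment_discrete rho_midE. Qed.

Lemma coupling_rho_star_rho_mid : coupling rho_star rho_mid pi_mid.
Proof.
split=> [A|B] _.
  rewrite pi_midE rho_starE !discrete_measureE !big_cons !big_nil /=.
  rewrite !indicE !in_setX !in_setT !andbT.
  by case: (0 \in A); case: (1 \in A) => /=; congr EFin; lra.
rewrite pi_midE rho_midE !discrete_measureE !big_cons !big_nil /=.
rewrite !indicE !in_setX !in_setT /=.
by case: (0 \in B); case: (1 \in B); case: (2^-1 \in B) => /=; congr EFin; lra.
Qed.

Lemma transport_cost_pi_mid lam : 0 < lam ->
  (\int[pi_mid]_z (`|z.1 - z.2| `^ lam)%:E <= b%:E)%E.
Proof.
move=> lam0; rewrite pi_midE integral_discrete_measure; last first.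
  apply: (measurableT_comp (f := fun x : R => `|x| `^ lam)).
    exact: measurable_normr_powR.
  exact: measurable_funB.
rewrite !big_cons big_nil /= lee_fin !subrr sub0r normrN normr0 powR0 ?gt_eqF //.
have -> : 1 - 2^-1 = 2^-1 :> R by lra.
have : (2^-1 : R) `^ lam <= 1.
  rewrite half_powRE expR_le1 oppr_le0 mulr_ge0 ?(ltW lam0) //.
  by apply: ln_ge0; rewrite ler1n.
by rewrite ger0_norm // => half_pow_le1; have := ler_wpM2l b_ge0 half_pow_le1; lra.
Qed.

Lemma energy_rho_mid p q : p != 0 -> q != 0 ->
  energy p q rho_mid = (Vpot p q 1 / 4 - b * (Vpot p q 1 / 2 - Vpot p q (2^-1))
                        + b ^+ 2 * (Vpot p q 1 / 4 - Vpot p q (2^-1)))%:E.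
Proof.
move=> p0 q0; rewrite (energy_discrete p q rho_midE) !big_cons !big_nil /=.
have -> : 1 - 2^-1 = 2^-1 :> R by lra.
have -> : 2^-1 - 1 = - 2^-1 :> R by lra.
rewrite !subrr !subr0 !sub0r !VpotN Vpot0 //; congr EFin.
by move: (Vpot p q 1) (Vpot p q 2^-1) => V1 Vh; field.
Qed.

End midpoint_perturbation.

Lemma rho_star_not_local_minimizer (R : realType) (p q lam : R) :
  p != 0 -> q != 0 -> 0 < lam -> Vpot p q (2^-1) < Vpot p q 1 / 2 ->
  ~ local_minimizer lam (energy p q) rho_star.
Proof.
move=> p0 q0 lam0 V_half [_ [eta [eta0 rho_star_min]]].
set D := Vpot p q 1 / 2 - Vpot p q (2^-1).
set K := Vpot p q 1 / 4 - Vpot p q (2^-1).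
have D0 : 0 < D by rewrite subr_gt0.
have K1 : 0 < `|K| + 1 by rewrite ltr_wpDl.
pose b := Num.min (Num.min 1 (eta `^ lam)) (D / (`|K| + 1)).
have b0 : 0 < b by rewrite !lt_min ltr01 powR_gt0 ?divr_gt0.
have b1 : b <= 1 by rewrite !ge_min lexx.
have b_eta : b <= eta `^ lam by rewrite !ge_min lexx orbT.
have bK : b * K < D.
  have : b * (`|K| + 1) <= D by rewrite -ler_pdivlMr // !ge_min lexx orbT.
  have := ler_norm K; nra.
have dist : wass_dist lam rho_star (rho_mid (ltW b0) b1) <= eta.
  apply: wass_dist_le_coupling (ltW eta0) (coupling_rho_star_rho_mid _ _) _ => //.
  by apply: le_trans (transport_cost_pi_mid _ _ lam0) _; rewrite lee_fin.
have := rho_star_min _ (finite_moment_rho_mid _ _ lam) dist.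
rewrite energy_rho_star // energy_rho_mid // lee_fin -/D -/K.
have : b * (b * K - D) < 0 by rewrite pmulr_rlt0 // subr_lt0.
nra.
Qed.

Theorem proposition2 (R : realType) (qstar q : R) :
  0 < qstar -> qstar * ln 2 = 2 `^ (qstar - 1) - 1 ->
  0 < q < qstar ->
  exists pstar : R, q < pstar /\
    forall p : R, q < p < pstar ->
    forall lam : R, 1 <= lam ->
      ~ local_minimizer lam (energy p q) rho_star.
Proof.
move=> _ qstar_root q_range; have /andP[q0 _] := q_range.
set c := 2 `^ (q - 1) - 1.
have c_lt : c < q * ln 2 := two_powR_sub1_lt qstar_root q_range.
have slope0 : 0 < (`|c| + 1) * ln 2 by rewrite mulr_gt0 ?ltr_wpDl // ln_gt0 // ltr1n.
exists (q + (q * ln 2 - c) / ((`|c| + 1) * ln 2)); split.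
  by rewrite ltrDl divr_gt0 // subr_gt0.
move=> p /andP[qp p_lt] lam lam1.
have p0 : 0 < p := lt_trans q0 qp.
apply: rho_star_not_local_minimizer; rewrite ?gt_eqF ?(lt_le_trans ltr01 lam1) //.
apply: Vpot_half_lt; first by rewrite q0.
by rewrite -ltr_pdivlMr // ltrBlDl.
Qed.
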